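(* The exponential $f(u)$ of the general elliptic formal group law $F_\mu$ is a Hurwitz series over $E=\mathbb{Z}[\mu_1,\mu_2,\mu_3,\mu_4,\mu_6]$, i.e. $f(u)=\sum_{k\ge0}\varphi_k\frac{u^k}{k!}$ with all $\varphi_k\in E$.
   Context: Let $\mu_1,\mu_2,\mu_3,\mu_4,\mu_6$ be independent indeterminates, $E=\mathbb{Z}[\mu_1,\dots,\mu_6]$. On the cubic $Y^2Z+\mu_1XYZ+\mu_3YZ^2=X^3+\mu_2X^2Z+\mu_4XZ^2+\mu_6Z^3$ with chord-tangent group law (neutral element $O=(0:1:0)$, three collinear points sum to zero), use Tate coordinates $t=-X/Y$, $s=-Z/Y$: the curve is $s=t^3+\mu_1ts+\mu_2t^2s+\mu_3s^2+\mu_4ts^2+\mu_6s^3$ with $s(t)$ the power series solution with $s(0)=0$. The general elliptic formal group law $F_\mu(t_1,t_2)\in E[[t_1,t_2]]$ gives the $t$-coordinate of $P_1+P_2$ for $P_i=(t_i,s(t_i))$. Its exponential is the unique $f\in(E\otimes\mathbb{Q})[[u]]$ with $f(0)=0$, $f'(0)=1$, $f(u+v)=F_\mu(f(u),f(v))$. *)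

From HB Require Import structures.
From mathcomp Require Import all_boot all_order all_algebra.
From mathcomp Require Import mpoly.

Set Implicit Arguments.
Unset Strict Implicit.
Unset Printing Implicit Defensive.

Import Order.TTheory GRing.Theory Num.Theory.
Local Open Scope ring_scope.

(* Formal power series, represented by their coefficient functions.   *)
(*   ser R  : R[[t]]      (a n  = coefficient of t^n)                  *)
(*   ser2 R : R[[t1,t2]]  (a i j = coefficient of t1^i t2^j)           *)
Definition ser (R : Type) := nat -> R.
Definition ser2 (R : Type) := nat -> nat -> R.

Section Series.
Variable R : comNzRingType.

Definition sone : ser R := fun n => (n == 0%N)%:R.
Definition smul (a b : ser R) : ser R :=
  fun n => \sum_(k < n.+1) a k * b (n - k)%N.
Definition spow (a : ser R) (m : nat) : ser R := iter m (smul a) sone.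

Definition s2const (c : R) : ser2 R :=
  fun i j => if (i == 0%N) && (j == 0%N) then c else 0.
Definition s2one : ser2 R := s2const 1.
Definition s2add (a b : ser2 R) : ser2 R := fun i j => a i j + b i j.
Definition s2opp (a : ser2 R) : ser2 R := fun i j => - a i j.
Definition s2sub (a b : ser2 R) : ser2 R := fun i j => a i j - b i j.
Definition s2scale (c : R) (a : ser2 R) : ser2 R := fun i j => c * a i j.
Definition s2mul (a b : ser2 R) : ser2 R :=
  fun i j => \sum_(p < i.+1) \sum_(q < j.+1) a p q * b (i - p)%N (j - q)%N.
Definition s2pow (a : ser2 R) (m : nat) : ser2 R := iter m (s2mul a) s2one.

(* Multiplicative inverse of a series with constant term 1:
   1/a = sum_n (1 - a)^n, and (1-a)^n has no terms of total degree < n. *)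
Definition s2inv1 (a : ser2 R) : ser2 R :=
  fun i j => \sum_(n < (i + j).+1) s2pow (s2sub s2one a) n i j.

Definition T1 : ser2 R := fun i j => ((i == 1%N) && (j == 0%N))%:R.
Definition T2 : ser2 R := fun i j => ((i == 0%N) && (j == 1%N))%:R.

(* g(u+v) as a series in u, v *)
Definition ser_add_arg (g : ser R) : ser2 R :=
  fun i j => 'C(i + j, i)%:R * g (i + j)%N.

(* Composition G(g(u), h(v)) for g, h with zero constant term
   (then (g^a)_i = 0 for a > i, so the sum below is the full one). *)
Definition s2comp (G : ser2 R) (g h : ser R) : ser2 R :=
  fun i j => \sum_(a < i.+1) \sum_(b < j.+1) G a b * spow g a i * spow h b j.

End Series.

Arguments sone {R}.
Arguments s2one {R}.
Arguments s2const {R}.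
Arguments T1 {R}.
Arguments T2 {R}.

(* EQ = E (x) Q = Q[mu1,...,mu6] = {mpoly rat[5]}                      *)
Definition EZ := {mpoly int[5]}.
Definition EQ := {mpoly rat[5]}.

Definition mu1 : EQ := 'X_(@Ordinal 5 0 isT).
Definition mu2 : EQ := 'X_(@Ordinal 5 1 isT).
Definition mu3 : EQ := 'X_(@Ordinal 5 2 isT).
Definition mu4 : EQ := 'X_(@Ordinal 5 3 isT).
Definition mu6 : EQ := 'X_(@Ordinal 5 4 isT).

Definition EZ_to_EQ (p : EZ) : EQ := map_mpoly (fun z : int => z%:~R) p.

Definition tser : ser EQ := fun n => (n == 1%N)%:R.
Definition is_tate_s (s : ser EQ) : Prop :=
  s 0%N = 0 /\
  forall n, s n =
    spow tser 3 n
    + mu1 * smul tser s n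
    + mu2 * smul (spow tser 2) s n
    + mu3 * spow s 2 n
    + mu4 * smul tser (spow s 2) n
    + mu6 * spow s 3 n.

Section FGL.
Variable s : ser EQ.

(* slope of the chord through P1 = (t1,s(t1)), P2 = (t2,s(t2)):
   lambda = (s(t2)-s(t1))/(t2-t1) = sum_n s_n sum_{a+b=n-1} t1^a t2^b *)
Definition lam : ser2 EQ := fun i j => s (i + j).+1.
(* intercept nu = s(t1) - lambda t1 *)
Definition nu : ser2 EQ :=
  fun i j => (j == 0%N)%:R * s i - (if i is i'.+1 then lam i' j else 0).

(* substituting s = lambda t + nu in the cubic gives
   A t^3 + B t^2 + ... = 0 with *)
Definition cubA : ser2 EQ :=
  s2add s2one (s2add (s2scale mu2 lam)
    (s2add (s2scale mu4 (s2pow lam 2)) (s2scale mu6 (s2pow lam 3)))).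
Definition cubB : ser2 EQ :=
  s2add (s2scale mu1 lam) (s2add (s2scale mu3 (s2pow lam 2))
   (s2add (s2scale mu2 nu) (s2add (s2scale (2%:R * mu4) (s2mul lam nu))
     (s2scale (3%:R * mu6) (s2mul (s2pow lam 2) nu))))).

(* third intersection point P3 = (t3, s3): t1 + t2 + t3 = - B / A *)
Definition t3 : ser2 EQ :=
  s2sub (s2opp (s2add T1 T2)) (s2mul cubB (s2inv1 cubA)).
Definition s3 : ser2 EQ := s2add (s2mul lam t3) nu.

(* P1 + P2 = -P3; in projective coords P3 = (t3 : -1 : s3) and
   -(X:Y:Z) = (X : -Y - mu1 X - mu3 Z : Z), so the t-coordinate of
   P1 + P2 is  -t3 / (1 - mu1 t3 - mu3 s3). *)
Definition F_mu : ser2 EQ :=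
  s2mul (s2opp t3)
    (s2inv1 (s2sub s2one (s2add (s2scale mu1 t3) (s2scale mu3 s3)))).

End FGL.

Definition is_exponential (F : ser2 EQ) (f : ser EQ) : Prop :=
  f 0%N = 0 /\ f 1%N = 1 /\
  forall i j, ser_add_arg f i j = s2comp F f f i j.

From HB Require Import structures.
From mathcomp Require Import all_boot all_order all_algebra.
From mathcomp Require Import mpoly.

Set Implicit Arguments.
Unset Strict Implicit.
Unset Printing Implicit Defensive.

Import GRing.Theory Num.Theory.
Local Open Scope ring_scope.

(* Differentiating f(u + v) = F(f(u), f(v)) in v at v = 0 gives
   f'(u) = sum_a F_(a,1) f(u)^a.  The coefficients of F lie in E: the
   recursion defining s(t) has coefficients in E, and F is built from s by
   ring operations and inversion of series with constant term 1.  Since the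
   Hurwitz series over E form a ring, this identity yields k! f_k in E by
   induction on k. *)

Section SeriesOverSubring.
Variables (R : comNzRingType) (S : subringClosed R).
Implicit Types (a b : ser R) (A B : ser2 R).

Lemma smul0 a b : smul a b 0 = a 0%N * b 0%N.
Proof. by rewrite /smul big_ord1 subnn. Qed.

Lemma smul_in a b n :
  (forall k, (k <= n)%N -> a k \in S) -> (forall k, (k <= n)%N -> b k \in S) ->
  smul a b n \in S.
Proof.
move=> Sa Sb; apply: rpred_sum => -[k /= lt_kn] _.
by rewrite rpredM ?Sa ?Sb ?leq_subr.
Qed.

Lemma spow_in a m n : (forall k, (k <= n)%N -> a k \in S) -> spow a m n \in S.
Proof.
move=> Sa; elim: m n Sa => [|m IHm] n Sa; first exact: rpred_nat.
apply: smul_in => // k le_kn; apply: IHm => j le_jk.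
exact/Sa/(leq_trans le_jk).
Qed.

Lemma smul_in_lt a b n : a 0%N = 0 -> b 0%N = 0 ->
  (forall k, (k < n)%N -> a k \in S) -> (forall k, (k < n)%N -> b k \in S) ->
  smul a b n \in S.
Proof.
move=> a0 b0 Sa Sb; apply: rpred_sum => -[[|k] /= lt_kn] _.
  by rewrite a0 mul0r rpred0.
have [eq_kn|ne_kn] := eqVneq k.+1 n; first by rewrite eq_kn subnn b0 mulr0 rpred0.
have lt_k1n : (k.+1 < n)%N by rewrite ltn_neqAle ne_kn -ltnS.
by rewrite rpredM ?Sa ?Sb // ltn_subrL (leq_ltn_trans _ lt_k1n).
Qed.

Lemma spowS0 a m : a 0%N = 0 -> spow a m.+1 0 = 0.
Proof. by move=> a0; rewrite /= smul0 a0 mul0r. Qed.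

Lemma spow_in_lt a m n : a 0%N = 0 -> (forall k, (k < n)%N -> a k \in S) ->
  spow a m.+2 n \in S.
Proof.
move=> a0 Sa; apply: smul_in_lt (spowS0 m a0) _ _ => // k lt_kn.
by apply: spow_in => j le_jk; apply/Sa/(leq_ltn_trans le_jk).
Qed.

Definition ser2_over A := forall i j, A i j \in S.

Lemma s2const_over c : c \in S -> ser2_over (s2const c).
Proof. by move=> Sc i j; rewrite /s2const; case: ifP; rewrite ?rpred0. Qed.

Lemma s2add_over A B : ser2_over A -> ser2_over B -> ser2_over (s2add A B).
Proof. by move=> SA SB i j; apply: rpredD. Qed.

Lemma s2opp_over A : ser2_over A -> ser2_over (s2opp A).
Proof. by move=> SA i j; rewrite /s2opp rpredN. Qed.

Lemma s2sub_over A B : ser2_over A -> ser2_over B -> ser2_over (s2sub A B).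
Proof. by move=> SA SB i j; apply: rpredB. Qed.

Lemma s2scale_over c A : c \in S -> ser2_over A -> ser2_over (s2scale c A).
Proof. by move=> Sc SA i j; apply: rpredM. Qed.

Lemma s2mul_over A B : ser2_over A -> ser2_over B -> ser2_over (s2mul A B).
Proof.
by move=> SA SB i j; do 2!apply: rpred_sum => ? _; apply: rpredM.
Qed.

Lemma s2pow_over A m : ser2_over A -> ser2_over (s2pow A m).
Proof.
move=> SA; elim: m => [|m IHm]; last exact: s2mul_over.
exact/s2const_over/rpred1.
Qed.

Lemma s2inv1_over A : ser2_over A -> ser2_over (s2inv1 A).
Proof.
move=> SA i j; apply: rpred_sum => n _; apply: s2pow_over.
exact/s2sub_over/SA/s2const_over/rpred1.
Qed.

Lemma T1_over : ser2_over T1. Proof. by move=> i j; apply: rpred_nat. Qed.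
Lemma T2_over : ser2_over T2. Proof. by move=> i j; apply: rpred_nat. Qed.

Definition hurwitz_upto a n := forall k, (k <= n)%N -> k`!%:R * a k \in S.

(* k! (a b)_k = sum_j binom(k, j) (j! a_j) ((k - j)! b_(k-j)) *)
Lemma smul_hurwitz a b n :
  hurwitz_upto a n -> hurwitz_upto b n -> hurwitz_upto (smul a b) n.
Proof.
move=> Ha Hb k le_kn; rewrite /smul mulr_sumr; apply: rpred_sum => -[j] /=.
rewrite ltnS => le_jk _.
have -> : k`!%:R * (a j * b (k - j)%N) =
    'C(k, j)%:R * ((j`!%:R * a j) * ((k - j)`!%:R * b (k - j)%N)).
  by rewrite -(bin_fact le_jk) !natrM -mulrA mulrACA.
rewrite rpredM ?rpred_nat // rpredM ?Ha ?Hb ?(leq_trans le_jk) //.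
exact: leq_trans (leq_subr _ _) le_kn.
Qed.

Lemma spow_hurwitz a m n : hurwitz_upto a n -> hurwitz_upto (spow a m) n.
Proof.
move=> Ha; elim: m => [|m IHm]; last exact: smul_hurwitz.
by move=> k _; rewrite -natrM rpred_nat.
Qed.

End SeriesOverSubring.

Section EllipticFGL.
Variable S : subringClosed EQ.
Hypothesis mu_in : [/\ mu1 \in S, mu2 \in S, mu3 \in S, mu4 \in S & mu6 \in S].

Lemma tate_s_in s : is_tate_s s -> forall k, s k \in S.
Proof.
case: mu_in => S1 S2 S3 S4 S6 [s0 Es]; elim/ltn_ind => n IHn.
case: n IHn => [|n] IHn; first by rewrite s0 rpred0.
have St k : tser k \in S by apply: rpred_nat.
have t0 : tser 0 = 0 by [].
rewrite Es; do ![apply: rpredD].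
- by apply: spow_in => k _.
- by rewrite rpredM //; apply: smul_in_lt.
- rewrite rpredM //; apply: smul_in_lt => //; first exact: spowS0.
  by move=> k _; apply: spow_in.
- by rewrite rpredM //; apply: spow_in_lt.
- rewrite rpredM //; apply: smul_in_lt => //; first exact: spowS0.
  by move=> k lt_kn; apply: spow_in_lt => // j lt_jk; apply/IHn/(ltn_trans lt_jk).
- by rewrite rpredM //; apply: spow_in_lt.
Qed.

Lemma F_mu_over s : (forall k, s k \in S) -> ser2_over S (F_mu s).
Proof.
case: mu_in => S1 S2 S3 S4 S6 Ss.
have Slam : ser2_over S (lam s) by move=> i j; apply: Ss.
have Snu : ser2_over S (nu s).
  move=> i j; apply: rpredB; first by apply: rpredM; [exact: rpred_nat | exact: Ss].
  by case: i => [|i]; [exact: rpred0 | exact: Slam].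
have Sone : ser2_over S s2one by apply/s2const_over/rpred1.
have SA : ser2_over S (cubA s).
  by do ![assumption | apply: s2add_over | apply: s2scale_over | apply: s2pow_over].
have SB : ser2_over S (cubB s).
  by do ![assumption | apply: s2add_over | apply: s2scale_over | apply: s2mul_over
         | apply: s2pow_over | apply: rpredM | exact: rpred_nat].
have St3 : ser2_over S (t3 s).
  by do ![assumption | apply: s2sub_over | apply: s2opp_over | apply: s2add_over
         | apply: s2mul_over | apply: s2inv1_over | exact: T1_over | exact: T2_over].
have Ss3 : ser2_over S (s3 s) by apply: s2add_over => //; apply: s2mul_over.
by do ![assumption | apply: s2mul_over | apply: s2opp_over | apply: s2inv1_over
       | apply: s2sub_over | apply: s2add_over | apply: s2scale_over].
Qed.
End EllipticFGL.

(* The coefficient of v^1 in f(u + v) = F(f(u), f(v)), using f(0) = 0 and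
   f'(0) = 1. *)
Lemma exponential_deriv F f : is_exponential F f -> forall i,
  i.+1%:R * f i.+1 = \sum_(a < i.+1) F a 1%N * spow f a i.
Proof.
case=> f0 [f1 Ef] i; have := Ef i 1%N.
rewrite /ser_add_arg /s2comp addn1 binSn => ->.
apply: eq_bigr => a _; rewrite big_ord_recr big_ord1 /=.
have -> : smul f sone 1 = 1.
  by rewrite /smul big_ord_recr big_ord1 /= f0 f1 mul0r add0r subnn mulr1.
by rewrite [sone 1]/sone !mulr0 add0r mulr1.
Qed.

Lemma exponential_hurwitz (S : subringClosed EQ) F f :
  ser2_over S F -> is_exponential F f -> forall k, k`!%:R * f k \in S.
Proof.
move=> SF Ff; suff Hf n : hurwitz_upto S f n by move=> k; apply: Hf.
elim: n => [|n IHn] k.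
  by rewrite leqn0 => /eqP->; case: Ff => -> _; rewrite mulr0 rpred0.
rewrite leq_eqVlt => /orP[/eqP->|]; last exact: IHn.
rewrite factS natrM [n.+1%:R * _]mulrC -mulrA (exponential_deriv Ff) mulr_sumr.
apply: rpred_sum => a _; rewrite mulrCA rpredM ?SF //.
exact: spow_hurwitz IHn _ (leqnn n).
Qed.

(* [Num.int_num_subdef], the predicate underlying [Num.int], is the one that
   carries the subring structure [mpolyOver] needs. *)
Local Notation EZpoly := (mpolyOver 5 (@Num.int_num_subdef rat)).

Lemma EZpolyP p : p \in EZpoly -> exists q : EZ, p = EZ_to_EQ q.
Proof.
move=> /mpolyOverP Zp; exists (\sum_(m <- msupp p) numq p@_m *: 'X_[m]).
rewrite /EZ_to_EQ -[fun z => _]/(intr : int -> rat) rmorph_sum [LHS]mpolyE.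
by apply: eq_bigr => m _ /=; rewrite map_mpolyZ map_mpolyX /= (numqK (Zp m)).
Qed.

Lemma mu_EZpoly :
  [/\ mu1 \in EZpoly, mu2 \in EZpoly, mu3 \in EZpoly, mu4 \in EZpoly
    & mu6 \in EZpoly].
Proof. by split; apply: mpolyOverX. Qed.

Theorem mainTheorem5 (s : ser EQ) (f : ser EQ) :
  is_tate_s s ->
  is_exponential (F_mu s) f ->
  forall k : nat, exists phi : EZ, (k`!)%:R * f k = EZ_to_EQ phi.
Proof.
move=> Ts Ff k; apply: EZpolyP; apply: (exponential_hurwitz _ Ff).
exact/(F_mu_over mu_EZpoly)/(tate_s_in mu_EZpoly).
Qed.
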